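(* Let $\eta$ be a formal differential operator on $\mathcal{P}_c$, $\eta(y)=\sum_{k=0}^\infty M_k y^{(k)}$, where each $M_k$ is a complex polynomial with $\deg M_k\le k$ ($M_0$ a constant); for $k\in\mathbb{N}$ write $M_k=m_{kk}x^k+R_{k-1}$ with $\deg R_{k-1}\le k-1$. Let $d=(d_j)_{j\in\mathbb{N}_0}$ be a sequence of complex scalars, let $n\in\mathbb{N}$, and assume $d_n-d_0=\sum_{k=1}^n p(n,k)\,m_{kk}$. Assume that there are polynomials $p_0\equiv 1,p_1,\dots,p_{n-1}$ with $\deg p_r=r$ and $\eta p_r=d_rp_r$ for $0\le r\le n-1$. Let $(\alpha_j^{n-1})_{j=0}^{n-1}$ be the scalars with $\sum_{k=1}^n p(n,k)R_{k-1}x^{n-k}=\sum_{j=0}^{n-1}\alpha_j^{n-1}p_j$. Then there exists a polynomial $p_n=x^n+q_{n-1}$ with $\deg q_{n-1}\le n-1$ and $\eta p_n=d_np_n$ if and only if there exists an $n$-tuple of scalars $(\beta_j^{n-1})_{j=0}^{n-1}$ such that $(d_n-d_j)\beta_j^{n-1}=\alpha_j^{n-1}$ for all $0\le j\le n-1$.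
   Context: $\mathcal{P}_c$ is the space of polynomials in one real variable with complex coefficients; $y^{(k)}$ is the $k$-th derivative. For $n\in\mathbb{N}$ and $1\le r\le n$, $p(n,r)=\frac{n!}{(n-r)!}$. *)

(* Complex numbers: R[i] = complex R for R : realType
   (with R the real numbers this is C). *)
From HB Require Import structures.
From mathcomp Require Import all_boot all_order all_algebra.
From mathcomp Require Import complex.
From mathcomp Require Import reals.
Set Implicit Arguments. Unset Strict Implicit. Unset Printing Implicit Defensive.
Import Order.TTheory GRing.Theory Num.Theory.
Local Open Scope ring_scope.

(* The formal differential operator eta(y) = sum_k M_k y^(k); on a
   polynomial y only the terms k < size y (i.e. k <= deg y) are nonzero. *)
Definition diffop (C : nzRingType) (M : nat -> {poly C}) (y : {poly C}) : {poly C} :=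
  \sum_(k < size y) M k * y^`(k).

Definition mkk (C : nzRingType) (M : nat -> {poly C}) (k : nat) : C := (M k)`_k.

Definition Rk (C : nzRingType) (M : nat -> {poly C}) (k : nat) : {poly C} :=
  M k - (mkk M k) *: 'X^k.

Definition pnr (n r : nat) : nat := n ^_ r.

From HB Require Import structures.
From mathcomp Require Import all_boot all_order all_algebra.
From mathcomp Require Import complex.
From mathcomp Require Import reals.
From mathcomp Require Import ring.
Set Implicit Arguments. Unset Strict Implicit. Unset Printing Implicit Defensive.
Import Order.TTheory GRing.Theory Num.Theory.
Local Open Scope ring_scope.

(** The polynomials [p_0, ..., p_{n-1}] (with [deg p_r = r]) form a basis of the
    polynomials of degree [< n], on which [eta - d_n] acts diagonally with
    eigenvalues [d_j - d_n].  Since [eta x^n = d_n x^n + sum_j alpha_j p_j] by the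
    hypothesis on [d_n - d_0], writing [q = sum_j beta_j p_j] gives
    [(eta - d_n)(x^n + q) = sum_j (alpha_j - (d_n - d_j) beta_j) p_j], and this
    vanishes iff every coefficient does. *)

Section Diffop.
Variables (C : comNzRingType) (M : nat -> {poly C}).

Lemma diffop_widen N (y : {poly C}) : (size y <= N)%N ->
  diffop M y = \sum_(k < N) M k * y^`(k).
Proof.
move=> le_yN; rewrite /diffop (big_ord_widen N (fun k => M k * y^`(k)) le_yN).
rewrite big_mkcond; apply: eq_bigr => k _; case: ltnP => // le_yk.
by rewrite derivn_poly0 // mulr0.
Qed.

Lemma diffop_is_linear : linear (diffop M).
Proof.
move=> a y z; set N := maxn (size y) (size z).
have le_y : (size y <= N)%N by rewrite leq_maxl.
have le_z : (size z <= N)%N by rewrite leq_maxr.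
have le_ayz : (size (a *: y + z)%R <= N)%N.
  rewrite (leq_trans (size_polyD _ _)) // geq_max le_z andbT.
  exact: leq_trans (size_scale_leq a y) le_y.
rewrite (diffop_widen le_y) (diffop_widen le_z) (diffop_widen le_ayz).
rewrite scaler_sumr -big_split; apply: eq_bigr => k _.
by rewrite derivnD derivnZ mulrDr scalerAr.
Qed.

HB.instance Definition _ :=
  GRing.isLinear.Build C {poly C} {poly C} _ (diffop M) diffop_is_linear.

Lemma mul_Xsubn_mkk_Rk k n : (k <= n)%N ->
  M k * 'X^(n - k) = mkk M k *: 'X^n + Rk M k * 'X^(n - k).
Proof.
move=> le_kn; rewrite -{1}[M k](subrK (mkk M k *: 'X^k)) mulrDl addrC.
by rewrite -scalerAl -exprD subnKC.
Qed.

Lemma diffop_Xn n :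
  diffop M 'X^n = M 0%N * 'X^n
    + (\sum_(1 <= k < n.+1) (n ^_ k)%:R * mkk M k) *: 'X^n
    + \sum_(1 <= k < n.+1) (n ^_ k)%:R *: (Rk M k * 'X^(n - k)).
Proof.
rewrite /diffop size_polyXn big_ord_recl derivn0 -addrA; congr (_ + _).
rewrite !big_add1 !big_mkord scaler_suml -big_split; apply: eq_bigr => k _ /=.
by rewrite -derivnS derivnXn mulrnAr -scaler_nat mul_Xsubn_mkk_Rk // scalerDr scalerA.
Qed.

End Diffop.

Section GradedFamily.
Variables (F : fieldType) (p : nat -> {poly F}).

Lemma size_graded_sum m (c : nat -> F) :
    (forall r, (r < m)%N -> size (p r) = r.+1) ->
  (size (\sum_(j < m) c j *: p j)%R <= m)%N.
Proof.
move=> size_p; apply: (big_ind (fun q : {poly F} => size q <= m)%N).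
- by rewrite size_poly0.
- by move=> q1 q2 le_q1 le_q2; rewrite (leq_trans (size_polyD _ _)) // geq_max le_q1.
- by move=> j _; rewrite (leq_trans (size_scale_leq _ _)) // size_p.
Qed.

Lemma graded_coef_neq0 r : size (p r) = r.+1 -> (p r)`_r != 0.
Proof.
move=> size_pr; have -> : (p r)`_r = lead_coef (p r) by rewrite lead_coefE size_pr.
by rewrite lead_coef_eq0 -size_poly_eq0 size_pr.
Qed.

Lemma graded_sum_free m (c : nat -> F) :
    (forall r, (r < m)%N -> size (p r) = r.+1) ->
  \sum_(j < m) c j *: p j = 0 -> forall j, (j < m)%N -> c j = 0.
Proof.
elim: m => [|m IHm] size_p // sum0 j.
have size_p' r : (r < m)%N -> size (p r) = r.+1 by move=> lt_rm; rewrite size_p // ltnW.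
rewrite big_ord_recr /= in sum0.
have cm0 : c m = 0.
  have /eqP := congr1 (fun q : {poly F} => q`_m) sum0.
  rewrite coefD nth_default ?size_graded_sum // coefZ coef0 add0r mulf_eq0.
  by rewrite (negPf (graded_coef_neq0 (size_p m (ltnSn m)))) orbF => /eqP.
move: sum0; rewrite cm0 scale0r addr0 => sum0.
by rewrite ltnS leq_eqVlt => /predU1P [-> //|]; apply: IHm.
Qed.

Lemma graded_sum_spans m (q : {poly F}) :
    (forall r, (r < m)%N -> size (p r) = r.+1) ->
  (size q <= m)%N -> exists c : nat -> F, q = \sum_(j < m) c j *: p j.
Proof.
elim: m q => [|m IHm] q size_p le_qm.
  by exists (fun=> 0); rewrite big_ord0; apply/size_poly_leq0P.
have size_p' r : (r < m)%N -> size (p r) = r.+1 by move=> lt_rm; rewrite size_p // ltnW.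
have size_pm := size_p m (ltnSn m).
set a := q`_m / (p m)`_m.
have : (size (q - a *: p m)%R <= m)%N.
  apply/leq_sizeP => i le_mi; rewrite coefB coefZ.
  case: (ltngtP i m) le_mi => // [lt_mi _ | -> _].
    by rewrite !nth_default ?mulr0 ?subr0 ?size_pm // (leq_trans le_qm).
  by rewrite divfK ?subrr // graded_coef_neq0.
case/IHm=> // c q_sub; exists (fun j => if j == m then a else c j).
rewrite big_ord_recr /= eqxx -[q](subrK (a *: p m)) q_sub; congr (_ + _).
by apply: eq_bigr => j _; rewrite ltn_eqF.
Qed.

End GradedFamily.

Section MonicEigenpolynomial.
Variables (F : fieldType) (M : nat -> {poly F}) (d : nat -> F) (n : nat).
Variables (p : nat -> {poly F}) (alpha : nat -> F).
Hypothesis size_p : forall r, (r < n)%N -> size (p r) = r.+1.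
Hypothesis diffop_p : forall r, (r < n)%N -> diffop M (p r) = d r *: p r.
Hypothesis diffop_Xn_alpha : diffop M 'X^n = d n *: 'X^n + \sum_(j < n) alpha j *: p j.

Lemma diffop_monic_sub (b : nat -> F) :
  let y := 'X^n + \sum_(j < n) b j *: p j in
  diffop M y - d n *: y = \sum_(j < n) (alpha j - (d n - d j) * b j) *: p j.
Proof.
rewrite /= linearD linear_sum /= diffop_Xn_alpha scalerDr scaler_sumr.
rewrite -[d n *: 'X^n + _ + _]addrA [d n *: 'X^n + (_ + _)]addrC addrKA.
rewrite -big_split -sumrB; apply: eq_bigr => j /= _.
rewrite linearZ /= diffop_p // !scalerA -scalerDl -scalerBl.
by congr (_ *: _); ring.
Qed.

Lemma monic_eigenpolynomial_iff :
  (exists q : {poly F}, (size q <= n)%N /\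
     diffop M ('X^n + q) = d n *: ('X^n + q))
  <->
  (exists beta : nat -> F, forall j, (j < n)%N -> (d n - d j) * beta j = alpha j).
Proof.
split=> [[q [le_qn eig_q]] | [beta beta_eq]].
  have [b q_def] := graded_sum_spans size_p le_qn; exists b => j lt_jn.
  pose c j := alpha j - (d n - d j) * b j.
  have sum0 : \sum_(j < n) c j *: p j = 0.
    by rewrite -diffop_monic_sub -q_def eig_q subrr.
  by have /eqP := graded_sum_free size_p sum0 lt_jn; rewrite subr_eq0 => /eqP.
exists (\sum_(j < n) beta j *: p j); split; first exact: size_graded_sum.
apply/eqP; rewrite -subr_eq0 diffop_monic_sub; apply/eqP.
by rewrite big1 // => j _; rewrite beta_eq // subrr scale0r.
Qed.

End MonicEigenpolynomial.

Theorem proposition1 (R : realType) (M : nat -> {poly R[i]})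
  (d : nat -> R[i]) (n : nat) (p : nat -> {poly R[i]}) (alpha : nat -> R[i]) :
  (forall k, (size (M k) <= k.+1)%N) ->
  (0 < n)%N ->
  d n - d 0%N = \sum_(1 <= k < n.+1) (pnr n k)%:R * mkk M k ->
  p 0%N = 1 ->
  (forall r, (r < n)%N -> size (p r) = r.+1) ->
  (forall r, (r < n)%N -> diffop M (p r) = d r *: p r) ->
  \sum_(1 <= k < n.+1) (pnr n k)%:R *: (Rk M k * 'X^(n - k))
    = \sum_(j < n) alpha j *: p j ->
  (exists q : {poly R[i]}, (size q <= n)%N /\
     diffop M ('X^n + q) = d n *: ('X^n + q))
  <->
  (exists beta : nat -> R[i], forall j, (j < n)%N -> (d n - d j) * beta j = alpha j).
Proof.
move=> _ n_gt0 dn_sub_d0 p0 size_p diffop_p alphaE.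
have M0 : M 0%N = (d 0%N)%:P.
  have := diffop_p 0%N n_gt0.
  by rewrite p0 /diffop size_poly1 big_ord1 derivn0 mulr1 alg_polyC.
apply: (monic_eigenpolynomial_iff size_p diffop_p).
rewrite diffop_Xn -alphaE M0 mul_polyC -scalerDl -[\sum_(1 <= k < n.+1) _]dn_sub_d0.
by rewrite [d 0%N + _]addrC subrK.
Qed.
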